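(* Let $n\ge2$, $m_1,\dots,m_n\ge1$, $X_i=\{0,\dots,m_i-1\}$, and let $T$ be the rooted tree whose level-$i$ vertices ($0\le i\le n$) are the words $x_1\cdots x_i$ with $x_j\in X_j$, the parent of $x_1\cdots x_i$ being $x_1\cdots x_{i-1}$; identify its last level $L_n$ with $X_1\times\cdots\times X_n$. Let $\bar p(x,y)$ ($x,y\in L_n$) be the insect transition probability, and $\alpha_1,\dots,\alpha_n$ as in the context. Set $p^0_i=\alpha_1\alpha_2\cdots\alpha_{n-i}(1-\alpha_{n-i+1})$ for $i=1,\dots,n-1$ and $p^0_n=1-\alpha_1$, and let $P$ be the nested product $$P=\sum_{i=1}^np^0_i\,(I_1\otimes\cdots\otimes I_{i-1}\otimes J_i\otimes J_{i+1}\otimes\cdots\otimes J_n),$$ i.e. $p(x,y)=\sum_{i=1}^np^0_i\big(\prod_{j<i}\delta(x_j,y_j)\big)\frac{1}{m_im_{i+1}\cdots m_n}$. Then $p(x,y)=\bar p(x,y)$ for all $x,y\in L_n$.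
   Context: Simple random walk on $T$: from each vertex move to a uniformly chosen neighbour (neighbours are parent and children). For $x,y\in L_n$, $\bar p(x,y)$ is the probability that the simple random walk started at $x$ is at $y$ at the first time $t\ge1$ at which it lies in $L_n$. Let $x_0=(0,\dots,0)\in L_n$ and for $0\le j\le n$ let $\xi_j$ be the ancestor of $x_0$ at level $n-j$ (so $\xi_0=x_0$, $\xi_n$ the root). For $1\le j\le n-1$, $\alpha_j$ is the probability that the simple random walk started at $\xi_j$ visits $\xi_{j+1}$ before visiting $L_n$; set $\alpha_n=0$. $I_i$ is the identity and $J_i$ the $m_i\times m_i$ matrix with all entries $1/m_i$; $\delta(a,b)=1$ if $a=b$ and $0$ otherwise. *)

From HB Require Import structures.
From mathcomp Require Import all_boot all_order all_algebra.
From mathcomp Require Import all_classical all_reals all_analysis.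
Set Implicit Arguments. Unset Strict Implicit. Unset Printing Implicit Defensive.
Import Order.TTheory GRing.Theory Num.Theory.
Import numFieldNormedType.Exports.
Local Open Scope ring_scope.

(* The tree T: vertices are words (seq nat) x_1...x_i, 0 <= i <= n, with
   x_j < m j (m is indexed 1-based: m j = m_j). *)

Section Tree.
Variables (R : realType) (n : nat) (m : nat -> nat).

Definition nbrs (u : seq nat) : seq (seq nat) :=
  (if size u is k.+1 then [:: take k u] else [::]) ++
  (if (size u < n)%N then [seq rcons u a | a <- iota 0 (m (size u).+1)]
   else [::]).

Definition deg (u : seq nat) : nat := size (nbrs u).

(* fh A t u y = probability that the simple random walk started at u
   enters the set A for the first time among times s >= 1 at time t,
   and is then at y.  (First-step decomposition of the path probabilities.) *)
Fixpoint fh (A : pred (seq nat)) (t : nat) (u y : seq nat) : R :=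
  match t with
  | 0 => 0
  | t'.+1 => \sum_(w <- nbrs u)
       (deg u)%:R^-1 *
       (if A w then ((t' == 0%N) && (w == y))%:R else fh A t' w y)
  end.

Definition hitprob (A : pred (seq nat)) (u y : seq nat) : R :=
  limn (series (fun t => fh A t u y)).

Definition inLn (w : seq nat) : bool := size w == n.

Definition pbar (x y : seq nat) : R := hitprob inLn x y.

Definition x0 : seq nat := nseq n 0%N.
Definition xi (j : nat) : seq nat := take (n - j) x0.

Definition alpha (j : nat) : R :=
  if (1 <= j <= n.-1)%N then
    hitprob (fun w => inLn w || (w == xi j.+1)) (xi j) (xi j.+1)
  else 0.

Definition p0 (i : nat) : R :=
  if i == n then 1 - alpha 1
  else (\prod_(1 <= k < (n - i).+1) alpha k) * (1 - alpha (n - i).+1).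

Definition pnest (x y : seq nat) : R :=
  \sum_(1 <= i < n.+1)
     p0 i * (\prod_(j < i.-1) (nth 0%N x j == nth 0%N y j)%:R)
          / (\prod_(i <= k < n.+1) (m k)%:R).

End Tree.

Definition leaf (n : nat) (m : nat -> nat) (x : seq nat) : Prop :=
  size x = n /\ forall j, (j < n)%N -> (nth 0%N x j < m j.+1)%N.

(* Both the ascent probabilities [alpha_j] and the transition probabilities
   [pbar x y] are hitting probabilities, so each is the unique solution of the
   first-step equations on a finite set of inner vertices from which the
   boundary is reachable (a discrete maximum principle); it suffices to exhibit
   explicit solutions.  The probability of climbing one level from height [d]
   above [L_n] obeys a continued-fraction recursion, and climbing several levels
   is a product of one-level ascents, which identifies [alpha_j].  For [pbar],
   the walk at level [k] either climbs one level (probability [alpha_(n-k)]) or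
   first meets [L_n] inside its own subtree, uniformly over its leaves;
   unfolding this recursion from the parent of [x] gives the nested formula. *)

From HB Require Import structures.
From mathcomp Require Import all_boot all_order all_algebra.
From mathcomp Require Import all_classical all_reals all_analysis.
From mathcomp Require Import zify ring.
Set Implicit Arguments. Unset Strict Implicit. Unset Printing Implicit Defensive.
Import Order.TTheory GRing.Theory Num.Theory.
Import numFieldNormedType.Exports.
Local Open Scope ring_scope.

Lemma sumr_const_seq (R : nmodType) (T : Type) (s : seq T) (c : R) :
  \sum_(w <- s) c = c *+ size s.
Proof. by elim: s => [|a s IH]; rewrite ?big_nil ?big_cons ?IH ?mulrS. Qed.

Lemma ler_sum_mem (R : numDomainType) (T : eqType) (s : seq T) (F : T -> R) x :
  (forall w, w \in s -> 0 <= F w) -> x \in s -> F x <= \sum_(w <- s) F w.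
Proof.
move=> F_ge0 xs; rewrite (perm_big _ (perm_to_rem xs)) big_cons lerDl big_seq.
by apply: sumr_ge0 => w /mem_rem; exact: F_ge0.
Qed.

Lemma mean_ge_max (R : numFieldType) (T : eqType) (s : seq T) (t : T -> R) M x :
  (forall w, w \in s -> t w <= M) -> x \in s ->
  M <= \sum_(w <- s) (size s)%:R^-1 * t w -> M <= t x.
Proof.
move=> tM xs M_le_mean.
have size_neq0 : (size s)%:R != 0 :> R by rewrite pnatr_eq0 size_eq0; case: s xs {tM M_le_mean}.
have c_gt0 : 0 < (size s)%:R^-1 :> R by rewrite invr_gt0 lt0r size_neq0 ler0n.
have F_ge0 w : w \in s -> 0 <= (size s)%:R^-1 * (M - t w).
  by move=> ws; rewrite mulr_ge0 ?subr_ge0 ?tM // ltW.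
have : (size s)%:R^-1 * (M - t x) <= 0.
  apply: le_trans (ler_sum_mem F_ge0 xs) _.
  under eq_bigr do rewrite mulrBr.
  by rewrite sumrB sumr_const_seq -mulrnAl -mulr_natl mulfV // mul1r subr_le0.
by rewrite pmulr_rle0 // subr_le0.
Qed.

Lemma seq_argmax (R : realDomainType) (T : eqType) (s : seq T) (P : pred T) (f : T -> R) x0 :
  x0 \in s -> P x0 ->
  exists2 x, (x \in s) && P x & forall v, v \in s -> P v -> f v <= f x.
Proof.
move=> x0s Px0.
have [x /andP [xs Px] xmax] : exists2 x, (x \in x0 :: s) && P x &
    forall v, v \in s -> P v -> f v <= f x.
  elim: s {x0s} => [|a s [z /andP [zs Pz] zmax]]; first by exists x0; rewrite ?mem_head.
  have [/andP [Pa lt_za]|ge_za] := boolP (P a && (f z < f a)).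
    exists a; first by rewrite !inE eqxx orbT Pa.
    move=> v; rewrite in_cons => /predU1P [-> //|vs Pv].
    exact: le_trans (zmax v vs Pv) (ltW lt_za).
  exists z; first by move: zs; rewrite !inE Pz andbT => /orP [] ->; rewrite ?orbT.
  move=> v; rewrite in_cons => /predU1P [-> Pa|]; last exact: zmax.
  by move: ge_za; rewrite Pa /= -leNgt.
by exists x => //; move: xs; rewrite Px andbT in_cons => /predU1P [->|].
Qed.

Section MaximumPrinciple.
Variables (R : realFieldType) (T : eqType) (nb : T -> seq T) (A : pred T).

Definition mean_on (b f : T -> R) (u : T) :=
  f u = \sum_(w <- nb u) (size (nb u))%:R^-1 * (if A w then b w else f w).

Lemma mean_onW b f u :
  (forall w, w \in nb u -> A w -> f w = b w) -> nb u != [::] ->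
  f u * (size (nb u))%:R = \sum_(w <- nb u) f w -> mean_on b f u.
Proof.
move=> fb nb_neq0 f_sum; rewrite /mean_on (eq_big_seq (fun w => (size (nb u))%:R^-1 * f w)).
  by rewrite -mulr_sumr -f_sum [f u * _]mulrC mulKf // pnatr_eq0 size_eq0.
by move=> w wu; case: ifP => // /(fb w wu) ->.
Qed.

Variables (S : pred T) (rank : T -> nat) (N : nat) (W : seq T).
Hypothesis S_W : forall u, S u -> u \in W.
Hypothesis S_closed : forall u w, S u -> w \in nb u -> A w || S w.
Hypothesis S_exit :
  forall u, S u -> exists2 w, w \in nb u & A w || S w && (rank u < rank w)%N.
Hypothesis S_rank : forall u, S u -> (rank u < N)%N.

Lemma mean_on0_eq0 d :
  (forall u, S u -> mean_on (fun=> 0) d u) -> forall u, S u -> d u = 0.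
Proof.
move=> d_mean u0 Su0.
have [x /andP [xW Sx] xmax] := seq_argmax (fun v => `|d v|) (S_W Su0) Su0.
set M := `|d x|.
(* at a vertex where [|d|] is maximal, every neighbour in [S] is maximal too;
   following [S_exit] then reaches [A], where [d] vanishes *)
suff M_le0 : M <= 0.
  by apply/normr0_eq0/eqP; rewrite eq_le normr_ge0 (le_trans (xmax _ (S_W Su0) Su0)).
have max_eq k : forall u, S u -> (N - rank u <= k)%N -> `|d u| = M -> M <= 0.
  elim: k => [|k IH] u Su u_rank du; first by have := S_rank Su; lia.
  have [w0 w0u exit_w0] := S_exit Su.
  pose t w := if A w then 0 else `|d w|.
  have M_le_tw0 : M <= t w0.
    apply: (mean_ge_max (s := nb u)) => // [w wu|].
      rewrite /t; case: ifP => Aw; first exact: normr_ge0.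
      by have := S_closed Su wu; rewrite Aw /= => Sw; exact: xmax (S_W Sw) Sw.
    rewrite -du (d_mean u Su); apply: le_trans (ler_norm_sum _ _ _) _.
    apply: ler_sum => w _; rewrite normrM ger0_norm ?invr_ge0 // /t.
    by case: (A w); rewrite ?normr0.
  move: exit_w0 M_le_tw0; rewrite /t; case: (A w0) => //= /andP [Sw0 lt_rank] M_le.
  apply: (IH w0 Sw0); first lia.
  by apply/eqP; rewrite eq_le M_le xmax // S_W.
exact: max_eq (leqnn _) erefl.
Qed.

Lemma mean_on_uniq b f g :
  (forall u, S u -> mean_on b f u) -> (forall u, S u -> mean_on b g u) ->
  forall u, S u -> f u = g u.
Proof.
move=> f_mean g_mean u Su; apply/eqP; rewrite -subr_eq0; apply/eqP.
apply: (@mean_on0_eq0 (fun v => f v - g v) _ u Su) => v Sv.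
rewrite /mean_on (f_mean v Sv) (g_mean v Sv) -sumrB; apply: eq_bigr => w _.
by case: (A w); rewrite ?subrr ?mulr0 // mulrBr.
Qed.

End MaximumPrinciple.

Section FirstStep.
Variables (R : realType) (n : nat) (m : nat -> nat) (A : pred (seq nat)) (y : seq nat).

Let hsum N u := series (fun t => fh R n m A t u y) N.

Lemma fh_ge0 t u : 0 <= fh R n m A t u y.
Proof.
elim: t u => [|t IH] u //=; apply: sumr_ge0 => w _.
by rewrite mulr_ge0 ?invr_ge0 //; case: (A w).
Qed.

Lemma hsumSS N u : hsum N.+2 u =
  \sum_(w <- nbrs n m u) (deg n m u)%:R^-1 * (if A w then (w == y)%:R else hsum N.+1 w).
Proof.
rewrite /hsum /series /= big_nat_recl //= add0r exchange_big /=.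
apply: eq_bigr => w _; rewrite -mulr_sumr; congr (_ * _).
by case: (A w); rewrite // big_nat_recl //= big1_eq addr0.
Qed.

Lemma hsum_le1 N u : hsum N u <= 1.
Proof.
elim: N u => [|[|N] IH] u; first by rewrite /hsum /series /= big_nil.
  by rewrite /hsum /series /= big_nat1.
rewrite hsumSS (@le_trans _ _ (\sum_(w <- nbrs n m u) (deg n m u)%:R^-1 * 1)) //.
  apply: ler_sum => w _; rewrite ler_wpM2l ?invr_ge0 //.
  by case: (A w); [case: (w == y) | exact: IH].
rewrite -mulr_sumr sumr_const_seq /deg; case: (size _) => [|k]; first by rewrite mulr0.
by rewrite mulVf // pnatr_eq0.
Qed.

Lemma hsum_cvg u : cvgn (hsum ^~ u).
Proof.
apply: nondecreasing_is_cvgn.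
  by apply: nondecreasing_series => k _ _; exact: fh_ge0.
by exists 1 => _ [N _ <-]; exact: hsum_le1.
Qed.

Lemma hitprob_mean u :
  mean_on (nbrs n m) A (fun w => (w == y)%:R) (hitprob R n m A ^~ y) u.
Proof.
rewrite /mean_on /hitprob; apply: cvg_lim => //.
have -> : series (fun t => fh R n m A t u y) = hsum ^~ u by [].
rewrite -(cvg_shiftn 2) /=.
under eq_cvg do rewrite addn2 hsumSS.
apply: cvg_big => [|w _]; first exact: add_continuous.
apply: cvgMl_tmp; case: (A w); first exact: cvg_cst.
by have := @hsum_cvg w; rewrite -cvg_shiftS.
Qed.

End FirstStep.

Section TreeShape.
Variables (n : nat) (m : nat -> nat).

Definition valid (u : seq nat) : bool :=
  all (fun j => (nth 0%N u j < m j.+1)%N) (iota 0 (size u)).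

Lemma validP u :
  reflect (forall j, (j < size u)%N -> (nth 0%N u j < m j.+1)%N) (valid u).
Proof.
apply: (iffP allP) => u_valid j; first by move=> lt_j; apply: u_valid; rewrite mem_iota.
by rewrite mem_iota => /andP [_ lt_j]; apply: u_valid.
Qed.

Lemma valid_take k u : valid u -> valid (take k u).
Proof.
move=> /validP u_valid; apply/validP => j; rewrite size_take_min ltn_min => /andP [lt_jk lt_ju].
by rewrite nth_take //; exact: u_valid.
Qed.

Lemma valid_rcons u a : valid u -> (a < m (size u).+1)%N -> valid (rcons u a).
Proof.
move=> /validP u_valid lt_a; apply/validP => j; rewrite size_rcons ltnS nth_rcons.
by rewrite leq_eqVlt => /predU1P [->|lt_j]; rewrite ?ltnn ?eqxx ?lt_j //; exact: u_valid.
Qed.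

Fixpoint level_words (k : nat) : seq (seq nat) :=
  if k is k'.+1 then [seq rcons u a | u <- level_words k', a <- iota 0 (m k'.+1)]
  else [:: [::]].

Lemma mem_level_words u : valid u -> u \in level_words (size u).
Proof.
elim/last_ind: u => [|u a IH] // /validP ua_valid; rewrite size_rcons /=.
have u_valid : valid u.
  apply/validP => j lt_j; have := ua_valid j; rewrite size_rcons nth_rcons lt_j; apply.
  exact: ltnW.
apply: allpairs_f; first exact: IH.
by have := ua_valid (size u); rewrite size_rcons nth_rcons ltnn eqxx mem_iota; apply.
Qed.

Definition inner_words : seq (seq nat) := [seq w | k <- iota 0 n, w <- level_words k].

Lemma mem_inner_words u : (size u < n)%N -> valid u -> u \in inner_words.
Proof.
move=> lt_u u_valid; apply/allpairsPdep; exists (size u), u.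
by rewrite mem_iota mem_level_words.
Qed.

Lemma nbrs_inner u : (size u < n)%N ->
  nbrs n m u = (if size u is k.+1 then [:: take k u] else [::]) ++
               [seq rcons u a | a <- iota 0 (m (size u).+1)].
Proof. by move=> lt_u; rewrite /nbrs lt_u. Qed.

Lemma deg_inner u : (size u < n)%N -> deg n m u = ((size u != 0%N) + m (size u).+1)%N.
Proof. by move=> lt_u; rewrite /deg nbrs_inner // size_cat size_map size_iota; case: (size u). Qed.

Lemma nbrs_leaf u : (0 < n)%N -> size u = n -> nbrs n m u = [:: take n.-1 u].
Proof. by move=> n_gt0 u_n; rewrite /nbrs u_n ltnn cats0; case: n n_gt0 u_n. Qed.

Lemma mem_nbrs u w : (size u < n)%N -> w \in nbrs n m u ->
  (exists2 k, size u = k.+1 & w = take k u) \/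
  (exists2 a, (a < m (size u).+1)%N & w = rcons u a).
Proof.
move=> lt_u; rewrite nbrs_inner // mem_cat => /orP [|/mapP [a a_lt ->]].
  by case: (size u) => [|k] //; rewrite inE => /eqP ->; left; exists k.
by right; exists a => //; move: a_lt; rewrite mem_iota.
Qed.

Lemma child_in_nbrs u a :
  (size u < n)%N -> (a < m (size u).+1)%N -> rcons u a \in nbrs n m u.
Proof. by move=> lt_u lt_a; rewrite nbrs_inner // mem_cat map_f ?orbT // mem_iota. Qed.

Lemma mean_on_inner (R : realFieldType) (A : pred (seq nat)) (b f : seq nat -> R) u :
  (size u < n)%N -> (0 < m (size u).+1)%N ->
  (forall w, A w -> f w = b w) ->
  f u * (deg n m u)%:R = (if size u is k.+1 then f (take k u) else 0) +
                         \sum_(a <- iota 0 (m (size u).+1)) f (rcons u a) ->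
  mean_on (nbrs n m) A b f u.
Proof.
move=> lt_u m_gt0 fb f_sum; apply: mean_onW => [w _||]; first exact: fb.
  by apply/eqP => nb0; have := child_in_nbrs lt_u m_gt0; rewrite nb0.
rewrite f_sum nbrs_inner // big_cat big_map; congr (_ + _).
by case: (size u) => [|k]; rewrite ?big_nil // big_seq1.
Qed.

End TreeShape.

Section Ascent.
Variables (R : realType) (n : nat) (m : nat -> nat).

(* the probability that the walk started at a vertex of level [n - d] reaches
   its parent before [L_n]; such a vertex has [m (n - d + 1)] children *)
Fixpoint ascent (d : nat) : R :=
  if d is d'.+1 then (1 + (m (n - d'))%:R * (1 - ascent d'))^-1 else 0.

Lemma ascent01 d : 0 <= ascent d <= 1.
Proof.
elim: d => [|d /andP [_ a_le1]] /=; first by rewrite lexx ler01.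
have den_ge1 : 1 <= 1 + (m (n - d))%:R * (1 - ascent d).
  by rewrite lerDl mulr_ge0 ?subr_ge0.
by rewrite invr_ge0 (le_trans ler01 den_ge1) invf_le1 // (lt_le_trans ltr01 den_ge1).
Qed.

Lemma ascentS d : ascent d.+1 * (1 + (m (n - d))%:R * (1 - ascent d)) = 1.
Proof.
have /andP [_ a_le1] := ascent01 d.
by rewrite /= mulVf // gt_eqF // (lt_le_trans ltr01) // lerDl mulr_ge0 ?subr_ge0.
Qed.

Definition climb (k0 s : nat) : R := \prod_(k0 <= t < s.+1) ascent (n - t).

Lemma climb_prev k0 : (0 < k0)%N -> climb k0 k0.-1 = 1.
Proof. by move=> k0_gt0; rewrite /climb prednK // big_geq. Qed.

Lemma climb_id k0 : climb k0 k0 = ascent (n - k0).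
Proof. by rewrite /climb big_nat1. Qed.

Lemma climb_leaf k0 : (k0 <= n)%N -> climb k0 n = 0.
Proof. by move=> k0_le; rewrite /climb big_nat_recr //= subnn mulr0. Qed.

Lemma climb_mean k0 s : (k0 <= s.+1)%N -> (s.+2 <= n)%N ->
  climb k0 s.+1 * (1 + (m s.+2)%:R) = climb k0 s + (m s.+2)%:R * climb k0 s.+2.
Proof.
move=> k0_le le_n.
rewrite /climb (big_nat_recr s.+2) ?(leqW k0_le) // (big_nat_recr s.+1) //=.
have := ascentS (n - s.+2).
rewrite (_ : (n - s.+2).+1 = n - s.+1)%N; last lia.
rewrite (_ : n - (n - s.+2) = s.+2)%N; last lia.
set P := \prod_(_ <= _ < _) _; set a1 := ascent _; set a2 := ascent _; set M := (m _)%:R.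
move=> a1_den; apply/eqP; rewrite -subr_eq0; apply/eqP.
transitivity (P * (a1 * (1 + M * (1 - a2)) - 1)); first by ring.
by rewrite a1_den subrr mulr0.
Qed.

Hypothesis m_gt0 : forall i, (1 <= i <= n)%N -> (0 < m i)%N.

Section Subtree.
Variable k0 : nat.
Hypotheses (k0_gt0 : (0 < k0)%N) (k0_lt : (k0 < n)%N).

Definition below (u : seq nat) : bool :=
  [&& (size u < n)%N, valid m u & take k0 u == nseq k0 0%N].

Let A w := inLn n w || (w == nseq k0.-1 0%N).

Lemma below_size u : below u -> (k0 <= size u)%N.
Proof.
case/and3P => _ _ /eqP /(congr1 size); rewrite size_take_min size_nseq => <-.
exact: geq_minr.
Qed.

Lemma below_nseq : below (nseq k0 0%N).
Proof.
rewrite /below size_nseq k0_lt take_nseq // eqxx andbT.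
apply/validP => i; rewrite size_nseq nth_nseq => lt_i; rewrite lt_i; apply: m_gt0; lia.
Qed.

Lemma below_parent u l : below u -> size u = l.+1 -> (k0 <= l)%N -> below (take l u).
Proof.
case/and3P => lt_u u_valid u0 u_l le_l.
rewrite /below size_take u_l ltnSn valid_take // take_takel // u0 andbT.
by move: lt_u; rewrite u_l; lia.
Qed.

Lemma below_top u l : below u -> size u = l.+1 -> (l < k0)%N -> take l u = nseq k0.-1 0%N.
Proof.
move=> u_below u_l lt_l; have := below_size u_below; rewrite u_l => le_l.
have /and3P [_ _ /eqP u0] := u_below.
rewrite -(take_takel _ (ltnW lt_l)) u0 take_nseq ?(ltnW lt_l) //; congr nseq; lia.
Qed.

Lemma below_child u a :
  below u -> (a < m (size u).+1)%N -> (size u).+1 != n -> below (rcons u a).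
Proof.
move=> u_below lt_a ne_n; have /and3P [lt_u u_valid u0] := u_below.
rewrite /below size_rcons valid_rcons // -cats1 takel_cat ?below_size // u0 andbT.
by move: ne_n; lia.
Qed.

Lemma climb_mean_on u : below u ->
  mean_on (nbrs n m) A (fun w => (w == nseq k0.-1 0%N)%:R) (fun v => climb k0 (size v)) u.
Proof.
move=> u_below; have /and3P [lt_u _ _] := u_below; have k0_le := below_size u_below.
apply: mean_on_inner => //; first by apply: m_gt0; lia.
  move=> w; have [->|ne_w] := eqVneq w (nseq k0.-1 0%N) => A_w.
    by rewrite size_nseq climb_prev.
  rewrite /A (negbTE ne_w) orbF in A_w.
  by rewrite (eqP A_w) climb_leaf // ltnW.
rewrite deg_inner //; under eq_bigr do rewrite size_rcons.
case u_l: (size u) k0_le lt_u => [|l] k0_le lt_u; first lia.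
rewrite size_take u_l ltnSn sumr_const_seq size_iota natrD -[climb _ _ *+ _]mulr_natl.
by rewrite (_ : (l.+1 != 0%N)%:R = 1 :> R) // climb_mean //; lia.
Qed.

Lemma hitprob_climb u : below u ->
  hitprob R n m A u (nseq k0.-1 0%N) = climb k0 (size u).
Proof.
move=> u_below.
apply: (mean_on_uniq (nb := nbrs n m) (A := A) (b := fun w => (w == nseq k0.-1 0%N)%:R)
  (f := hitprob R n m A ^~ _) (g := fun v => climb k0 (size v))
  (rank := size) (N := n) (W := inner_words n m) _ _ _ _ _ climb_mean_on u_below).
- by move=> v /and3P [lt_v v_valid _]; exact: mem_inner_words.
- move=> v w v_below; have /and3P [lt_v _ _] := v_below.
  move=> /(mem_nbrs lt_v) [[l v_l ->]|[a lt_a ->]].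
    have [lt_l|le_l] := ltnP l k0; last by rewrite below_parent ?orbT.
    by rewrite /A (below_top v_below) // eqxx orbT.
  have [v_n|ne_n] := eqVneq (size v).+1 n; last by rewrite below_child ?orbT.
  by rewrite /A /inLn size_rcons v_n eqxx.
- move=> v v_below; have /and3P [lt_v _ _] := v_below.
  have m_pos : (0 < m (size v).+1)%N by apply: m_gt0; rewrite lt_v.
  exists (rcons v 0%N); first exact: child_in_nbrs.
  rewrite size_rcons ltnSn andbT.
  have [v_n|ne_n] := eqVneq (size v).+1 n; last by rewrite below_child ?orbT.
  by rewrite /A /inLn size_rcons v_n eqxx.
- by move=> v /and3P [].
by move=> v _; exact: hitprob_mean.
Qed.

End Subtree.

Lemma alpha_ascent j : (1 <= j <= n.-1)%N -> alpha R n m j = ascent j.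
Proof.
move=> j_range; have [k0_gt0 k0_lt] : (0 < n - j)%N /\ (n - j < n)%N by split; lia.
have xi_nseq i : xi n i = nseq (n - i) 0%N by rewrite /xi /x0 take_nseq // leq_subr.
rewrite /alpha j_range !xi_nseq (_ : n - j.+1 = (n - j).-1)%N; last lia.
by rewrite hitprob_climb ?below_nseq // size_nseq climb_id subKn //; lia.
Qed.
End Ascent.

Section NestedFormula.
Variables (R : realType) (n : nat) (m : nat -> nat) (y : seq nat).

(* [rho 0 = 0] is the convention [alpha_n = 0] *)
Definition rho (t : nat) : R := alpha R n m (n - t).

Definition nleaves (l : nat) : R := \prod_(l.+1 <= s < n.+1) (m s)%:R.

Definition agree (l : nat) (u : seq nat) : R :=
  \prod_(j < l) (nth 0%N u j == nth 0%N y j)%:R.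

Definition weight (k i : nat) : R := (\prod_(i <= t < k.+1) rho t) * (1 - rho i.-1).

(* the hitting distribution at [y] seen from a vertex [u] of level [k]: see [phitS] *)
Definition phit (k : nat) (u : seq nat) : R :=
  \sum_(1 <= i < k.+2) weight k i * agree i.-1 u / nleaves i.-1.

Lemma rho_n : rho n = 0.
Proof. by rewrite /rho subnn. Qed.

Lemma nleavesS l : (l < n)%N -> nleaves l = (m l.+1)%:R * nleaves l.+1.
Proof. by move=> lt_l; rewrite /nleaves big_ltn. Qed.

Lemma nleaves_n : nleaves n = 1.
Proof. by rewrite /nleaves big_geq. Qed.

Lemma agree_eq l u v :
  (forall j, (j < l)%N -> nth 0%N u j = nth 0%N v j) -> agree l u = agree l v.
Proof. by move=> uv; apply: eq_bigr => j _; rewrite uv. Qed.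

Lemma agree_rcons u a :
  agree (size u).+1 (rcons u a) = agree (size u) u * (a == nth 0%N y (size u))%:R.
Proof.
rewrite /agree big_ord_recr /= nth_rcons ltnn eqxx; congr (_ * _).
by apply: eq_bigr => j _; rewrite nth_rcons ltn_ord.
Qed.

Lemma agree_take l u : (l <= size u)%N -> (l <= size y)%N ->
  agree l u = (take l u == take l y)%:R.
Proof.
elim: l => [|l IH] le_u le_y; first by rewrite /agree big_ord0 !take0.
rewrite /agree big_ord_recr /= -/(agree l u) IH ?(ltnW le_u) ?(ltnW le_y) //.
rewrite (take_nth 0%N le_u) (take_nth 0%N le_y) eqseq_rcons.
by case: (take l u == take l y); rewrite ?mul1r ?mul0r.
Qed.

Lemma phitS k u :
  phit k.+1 u = rho k.+1 * phit k u + (1 - rho k.+1) * agree k.+1 u / nleaves k.+1.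
Proof.
rewrite /phit (big_nat_recr k.+2) //= /weight [\prod_(k.+2 <= t < k.+2) _]big_geq // mul1r.
congr (_ + _).
rewrite mulr_sumr; apply: eq_big_nat => i /andP [_ lt_i].
by rewrite (big_nat_recr k.+1) //= !mulrA [_ * rho k.+1]mulrC.
Qed.

Lemma phit_eq k u v :
  (forall j, (j < k)%N -> nth 0%N u j = nth 0%N v j) -> phit k u = phit k v.
Proof.
move=> uv; apply: eq_big_nat => i /andP [i_ge1 lt_i].
by rewrite (@agree_eq _ u v) // => j lt_j; apply: uv; lia.
Qed.

Lemma phit_children u : (nth 0%N y (size u) < m (size u).+1)%N ->
  \sum_(a <- iota 0 (m (size u).+1)) phit (size u).+1 (rcons u a) =
  (m (size u).+1)%:R * rho (size u).+1 * phit (size u) u +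
  (1 - rho (size u).+1) * agree (size u) u / nleaves (size u).+1.
Proof.
move=> y_u.
have child a : phit (size u).+1 (rcons u a) = rho (size u).+1 * phit (size u) u +
    (1 - rho (size u).+1) * agree (size u) u / nleaves (size u).+1 *
    (a == nth 0%N y (size u))%:R.
  rewrite phitS agree_rcons (@phit_eq _ (rcons u a) u) => [|j lt_j]; first by ring.
  by rewrite nth_rcons lt_j.
under eq_bigr do rewrite child.
rewrite big_split /= sumr_const_seq size_iota -mulr_sumr.
rewrite (bigD1_seq (nth 0%N y (size u))) ?mem_iota ?iota_uniq //= eqxx.
rewrite big1 => [|a /negbTE -> //].
by rewrite addr0 mulr1; ring.
Qed.

Hypothesis n_ge2 : (2 <= n)%N.
Hypothesis m_gt0 : forall i, (1 <= i <= n)%N -> (0 < m i)%N.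

Lemma rho0 : rho 0 = 0.
Proof. by rewrite /rho subn0 /alpha; case: ifP => //; lia. Qed.

Lemma rho_ascent t : (1 <= t <= n)%N -> rho t = ascent R n m (n - t).
Proof.
move=> t_range; have [->|ne_tn] := eqVneq t n; first by rewrite rho_n subnn.
by rewrite /rho (alpha_ascent R m_gt0) //; lia.
Qed.

Lemma rho_rec k : (1 <= k <= n.-1)%N ->
  rho k * (1 + (m k.+1)%:R * (1 - rho k.+1)) = 1.
Proof.
move=> k_range.
have [e1 e2] : ((n - k.+1).+1 = n - k /\ n - (n - k.+1) = k.+1)%N by split; lia.
have := ascentS R n m (n - k.+1); rewrite e1 e2.
by rewrite (@rho_ascent k) ?(@rho_ascent k.+1) //; lia.
Qed.

Lemma nleaves_neq0 l : nleaves l != 0.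
Proof.
rewrite /nleaves prodf_seq_neq0; apply/allP => s; rewrite mem_index_iota => s_range.
by rewrite pnatr_eq0 -lt0n m_gt0 //; lia.
Qed.

Lemma phit0 u : phit 0 u = (nleaves 0)^-1.
Proof. by rewrite /phit big_nat1 /weight big_geq // rho0 subr0 /agree big_ord0 !mul1r. Qed.

Lemma phit_mean_root u :
  phit 0 u * (m 1)%:R = (m 1)%:R * rho 1 * phit 0 u + (1 - rho 1) * agree 0 u / nleaves 1.
Proof.
have m1_neq0 : (m 1)%:R != 0 :> R by rewrite pnatr_eq0 -lt0n m_gt0 //; lia.
rewrite phit0 /agree big_ord0 (@nleavesS 0); last lia.
by field; rewrite m1_neq0 nleaves_neq0.
Qed.

Lemma phit_mean_step l u : (l.+2 <= n)%N ->
  phit l.+1 u * (1 + (m l.+2)%:R) = phit l u +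
    ((m l.+2)%:R * rho l.+2 * phit l.+1 u + (1 - rho l.+2) * agree l.+1 u / nleaves l.+2).
Proof.
move=> le_n; have r_den := @rho_rec l.+1.
have M_neq0 : (m l.+2)%:R != 0 :> R by rewrite pnatr_eq0 -lt0n m_gt0 //; lia.
rewrite phitS (@nleavesS l.+1) //.
move: r_den M_neq0 (nleaves_neq0 l.+2).
set r := rho _; set r' := rho _; set M := (m _)%:R; set N := nleaves _.
set G := phit _ _; set E := agree _ _ => r_den M_neq0 N_neq0.
apply/eqP; rewrite -subr_eq0; apply/eqP.
transitivity ((r * (1 + M * (1 - r')) - 1) * (G - E / (M * N))).
  by field; rewrite M_neq0 N_neq0.
by rewrite r_den ?subrr ?mul0r //; lia.
Qed.

Lemma pnest_phit x : pnest R n m x y = phit n.-1 x.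
Proof.
rewrite /pnest /phit prednK ?(ltnW n_ge2) //; apply: eq_big_nat => i /andP [i_ge1 le_i].
rewrite /nleaves /agree prednK //; congr (_ * _ / _).
rewrite /weight prednK ?(ltnW n_ge2) // /p0 /rho (_ : n - i.-1 = (n - i).+1)%N; last lia.
have [->|ne_in] := eqVneq i n; first by rewrite subnn big_geq // mul1r.
congr (_ * _).
rewrite (big_addn 0 _ 1) (big_addn 0 _ i) subn1 /= big_nat_rev.
by apply: eq_big_nat => t /andP [_ lt_t]; congr alpha; lia.
Qed.

Hypothesis y_size : size y = n.

Lemma phit_leaf w : size w = n -> phit n w = (w == y)%:R.
Proof.
move=> w_n.
rewrite -(prednK (ltnW n_ge2)) phitS prednK ?(ltnW n_ge2) // rho_n.
by rewrite mul0r add0r subr0 mul1r nleaves_n divr1 agree_take ?w_n ?y_size // !take_oversize ?w_n ?y_size.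
Qed.

Lemma phit_mean u : (size u < n)%N -> (nth 0%N y (size u) < m (size u).+1)%N ->
  mean_on (nbrs n m) (inLn n) (fun w => (w == y)%:R) (fun v => phit (size v) v) u.
Proof.
move=> lt_u y_u; apply: mean_on_inner => //; first by apply: m_gt0; rewrite lt_u.
  by move=> w /eqP w_n; rewrite w_n phit_leaf.
rewrite deg_inner //; under eq_bigr do rewrite size_rcons.
rewrite phit_children //.
case u_l: (size u) lt_u => [|l] lt_u /=; first by rewrite add0r phit_mean_root.
rewrite size_take u_l ltnSn (@phit_eq l (take l u) u) => [|j lt_j]; last by rewrite nth_take.
by rewrite natrD phit_mean_step.
Qed.

Lemma hitprob_phit (y_nth : forall j, (j < n)%N -> (nth 0%N y j < m j.+1)%N) u :
  (size u < n)%N -> valid m u ->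
  hitprob R n m (inLn n) u y = phit (size u) u.
Proof.
pose S v := (size v < n)%N && valid m v.
move=> lt_u u_valid; have Su : S u by rewrite /S lt_u u_valid.
apply: (mean_on_uniq (nb := nbrs n m) (A := inLn n) (b := fun w => (w == y)%:R)
  (f := hitprob R n m (inLn n) ^~ y) (g := fun v => phit (size v) v)
  (rank := size) (N := n) (W := inner_words n m) _ _ _ _ _ _ Su).
- by move=> v /andP [lt_v v_valid]; exact: mem_inner_words.
- move=> v w /andP [lt_v v_valid] /(mem_nbrs lt_v) [[l v_l ->]|[a lt_a ->]].
    by rewrite /S size_take v_l ltnSn valid_take // andbT -ltnS -v_l ltnW ?orbT.
  by rewrite /inLn /S size_rcons valid_rcons // andbT -leq_eqVlt.
- move=> v /andP [lt_v v_valid].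
  have m_pos : (0 < m (size v).+1)%N by apply: m_gt0; rewrite lt_v.
  exists (rcons v 0%N); first exact: child_in_nbrs.
  by rewrite /inLn /S size_rcons valid_rcons // ltnSn !andbT -leq_eqVlt.
- by move=> v /andP [].
- by move=> v _; exact: hitprob_mean.
by move=> v /andP [lt_v _]; apply: phit_mean; rewrite ?y_nth.
Qed.

End NestedFormula.

Theorem proposition6p4 (R : realType) (n : nat) (m : nat -> nat)
  (hn : (2 <= n)%N) (hm : forall i, (1 <= i <= n)%N -> (1 <= m i)%N)
  (x y : seq nat) (hx : leaf n m x) (hy : leaf n m y) :
  pnest R n m x y = pbar R n m x y.
Proof.
have [[x_n x_valid] [y_n y_nth]] := (hx, hy).
have n_gt0 : (0 < n)%N by apply: ltnW.
set p := take n.-1 x.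
have p_n : size p = n.-1 by rewrite size_takel // x_n leq_pred.
have p_inner : inLn n p = false.
  by rewrite /inLn p_n; apply/negbTE; rewrite neq_ltn ltn_predL n_gt0.
rewrite /pbar (hitprob_mean R n m (inLn n) y x) nbrs_leaf // big_seq1 p_inner /= invr1 mul1r.
rewrite (hitprob_phit R hn hm y_n y_nth) ?p_n ?ltn_predL ?valid_take //; last first.
  by apply/validP; rewrite x_n.
rewrite (pnest_phit R m y hn); apply: phit_eq => j lt_j.
by rewrite nth_take.
Qed.
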